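(* Let $\mathcal K$ (UAVs) and $\mathcal I$ (subscribers) be finite sets. Fix $H>0$, $\sigma^2>0$, $\omega_{ij}>0$, transmit powers $p_j\ge 0$, subscriber positions $s_i\in\mathbb R^2$, previous UAV positions $\bar q_k\in\mathbb R^2$, association indicators $c_{ik}\in\{0,1\}$ with $\sum_kc_{ik}\le1$, $\sum_ic_{ik}\le 1$, constants $L>0$, $B>0$, $V\rho_1\ge0$, nonnegative weights $a_i$, and positive constants $R_{\rm cov}$, $d_{\min}$, $s_{\max}$. For UAV positions $q=(q_k)_{k\in\mathcal K}$, $q_k\in\mathbb R^2$, let $h_{ij}(q)=\omega_{ij}/(H^2+\|q_j-s_i\|^2)$ and $r_i(q)=\sum_kc_{ik}\log_2\big(1+\frac{p_kh_{ik}(q)}{\sigma^2+\sum_{j\ne k}p_jh_{ij}(q)}\big)$. Problem (T): maximize $\Psi(q)=\sum_ia_ir_i(q)-V\rho_1\sum_i\frac{L}{B\,r_i(q)}$ (with $L/(B\cdot0)=+\infty$) subject to $\|q_k-s_i\|\le R_{\rm cov}$ for all $i,k$; $\|q_k-q_j\|^2\ge d_{\min}^2$ for all $k\ne j$; $\|q_k-\bar q_k\|^2\le s_{\max}^2$ for all $k$. Let $\mathrm{OPT}_T$ be the supremum of $\Psi$ over this feasible set. Fix a local point $q^{(r)}$ and define $d^{(r)}_{ij}=H^2+\|q^{(r)}_j-s_i\|^2$, $D^{(r)}_i=\log_2(\sigma^2+\sum_jp_j\omega_{ij}/d^{(r)}_{ij})$, $E^{(r)}_{ij}=p_j\omega_{ij}/\big((d^{(r)}_{ij})^2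 2^{D^{(r)}_i}\ln2\big)$, $\tilde\Lambda_{ik}(b)=-\log_2(\sigma^2+\sum_{j\ne k}p_j\omega_{ij}/(H^2+b_{ij}))$. Problem (C): maximize $\sum_ia_i\eta_i-V\rho_1\sum_i\xi_i$ over $q$, $\eta=(\eta_i)$, $\xi=(\xi_i)$, $b=(b_{ij})$ with $b_{ij}>-H^2$, subject to: $\xi_i\ge0$, $\eta_i\ge0$, $\xi_i\eta_i\ge L/B$ for all $i$; for all $i$, $\sum_kc_{ik}\big(D^{(r)}_i-\sum_jE^{(r)}_{ij}(\|q_j-s_i\|^2-\|q^{(r)}_j-s_i\|^2)\big)+\sum_kc_{ik}\tilde\Lambda_{ik}(b)\ge\eta_i$; for all $i,j$: $-\|q^{(r)}_j-s_i\|^2+2(q^{(r)}_j-s_i)^{\rm T}(q_j-s_i)\ge b_{ij}$; for all $k\ne j$: $-\|q^{(r)}_k-q^{(r)}_j\|^2+2(q^{(r)}_k-q^{(r)}_j)^{\rm T}(q_k-q_j)\ge d_{\min}^2$; $\|q_k-s_i\|\le R_{\rm cov}$ for all $i,k$; $\|q_k-\bar q_k\|\le s_{\max}$ for all $k$. Let $\mathrm{OPT}_C$ be the supremum of the objective of (C) ($-\infty$ if infeasible). Then $\mathrm{OPT}_C\le\mathrm{OPT}_T$, i.e., the optimal value of (C) is a lower bound on the optimal value of (T).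
   Context: Problem (T) is the per-slot UAV trajectory subproblem of a Lyapunov drift-plus-penalty scheme for multi-UAV video delivery, with fixed association and fixed powers: UAVs fly at common altitude $H$, $q_k$ is UAV $k$'s horizontal position in the current slot and $\bar q_k$ in the previous slot, $R_{\rm cov}$ is the line-of-sight coverage radius (written $H\tan^{-1}\theta$ in the paper), $d_{\min}$ the minimum inter-UAV safety distance, $s_{\max}$ the maximum per-slot flight distance. In the paper $a_i=[X_i(t)]^++[Z_i(t)]^+$ (virtual queue backlogs, $[x]^+=\max\{x,0\}$), $L$ is video data length per slot and $B$ the bandwidth. *)

From HB Require Import structures.
From mathcomp Require Import all_boot all_order all_algebra.
From mathcomp Require Import boolp classical_sets reals constructive_ereal ereal exp.
Set Implicit Arguments. Unset Strict Implicit. Unset Printing Implicit Defensive.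
Import Order.TTheory GRing.Theory Num.Theory.
Local Open Scope ring_scope.
Local Open Scope classical_set_scope.

Definition pt (R : realType) := (R * R)%type.
Definition dotp (R : realType) (x y : pt R) : R := x.1 * y.1 + x.2 * y.2.
Definition subp (R : realType) (x y : pt R) : pt R := (x.1 - y.1, x.2 - y.2).
Definition sqdist (R : realType) (x y : pt R) : R := dotp (subp x y) (subp x y).
Definition dist (R : realType) (x y : pt R) : R := Num.sqrt (sqdist x y).

Definition log2 (R : realType) (x : R) : R := ln x / ln 2.

Record params (R : realType) (K I : finType) := Params {
  Halt   : R;
  sigma2 : R;
  omega  : I -> K -> R;
  pw     : K -> R;
  spos   : I -> pt R;
  qbar   : K -> pt R;
  assoc  : I -> K -> R;
  Lvid   : R;
  Bw     : R;
  Vrho   : R;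
  wgt    : I -> R;
  Rcov   : R;
  dmin   : R;
  smax   : R }.


Definition hgain R K I (P : params R K I) (q : K -> pt R) (i : I) (j : K) : R :=
  omega P i j / (Halt P ^+ 2 + sqdist (q j) (spos P i)).

Definition rate R K I (P : params R K I) (q : K -> pt R) (i : I) : R :=
  \sum_(k : K) assoc P i k *
     log2 (1 + pw P k * hgain P q i k /
               (sigma2 P + \sum_(j : K | j != k) pw P j * hgain P q i j)).

Definition delay_pen R K I (P : params R K I) (q : K -> pt R) (i : I) : \bar R :=
  if rate P q i == 0 then +oo%E else (Lvid P / (Bw P * rate P q i))%:E.

Definition PsiT R K I (P : params R K I) (q : K -> pt R) : \bar R :=
  ((\sum_(i : I) wgt P i * rate P q i)%:E
   - (Vrho P)%:E * (\sum_(i : I) delay_pen P q i))%E.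

Definition feasT R K I (P : params R K I) : set (K -> pt R) :=
  [set q | (forall i k, dist (q k) (spos P i) <= Rcov P) /\
           (forall k j, k != j -> sqdist (q k) (q j) >= dmin P ^+ 2) /\
           (forall k, sqdist (q k) (qbar P k) <= smax P ^+ 2)].

Definition OPT_T R K I (P : params R K I) : \bar R :=
  ereal_sup [set PsiT P q | q in feasT P].

Definition dr R K I (P : params R K I) (qr : K -> pt R) (i : I) (j : K) : R :=
  Halt P ^+ 2 + sqdist (qr j) (spos P i).

Definition Dr R K I (P : params R K I) (qr : K -> pt R) (i : I) : R :=
  log2 (sigma2 P + \sum_(j : K) pw P j * omega P i j / dr P qr i j).

Definition Er R K I (P : params R K I) (qr : K -> pt R) (i : I) (j : K) : R :=
  pw P j * omega P i j /
    ((dr P qr i j) ^+ 2 * powR 2 (Dr P qr i) * ln 2).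

Definition Lamt R K I (P : params R K I) (b : I -> K -> R) (i : I) (k : K) : R :=
  - log2 (sigma2 P + \sum_(j : K | j != k) pw P j * omega P i j / (Halt P ^+ 2 + b i j)).

Definition varC R (K I : finType) :=
  ((K -> pt R) * (I -> R) * (I -> R) * (I -> K -> R))%type.

Definition objC R K I (P : params R K I) (x : varC R K I) : R :=
  let: (q, eta, xi, b) := x in
  \sum_(i : I) wgt P i * eta i - Vrho P * \sum_(i : I) xi i.

Definition feasC R K I (P : params R K I) (qr : K -> pt R) : set (varC R K I) :=
  [set x | let: (q, eta, xi, b) := x in
    (forall i j, b i j > - Halt P ^+ 2) /\
    (forall i, 0 <= xi i /\ 0 <= eta i /\ xi i * eta i >= Lvid P / Bw P) /\
    (forall i,
       \sum_(k : K) assoc P i k *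
          (Dr P qr i - \sum_(j : K) Er P qr i j *
              (sqdist (q j) (spos P i) - sqdist (qr j) (spos P i)))
       + \sum_(k : K) assoc P i k * Lamt P b i k >= eta i) /\
    (forall i j,
       - sqdist (qr j) (spos P i)
       + 2 * dotp (subp (qr j) (spos P i)) (subp (q j) (spos P i)) >= b i j) /\
    (forall k j, k != j ->
       - sqdist (qr k) (qr j)
       + 2 * dotp (subp (qr k) (qr j)) (subp (q k) (q j)) >= dmin P ^+ 2) /\
    (forall i k, dist (q k) (spos P i) <= Rcov P) /\
    (forall k, dist (q k) (qbar P k) <= smax P)].

Definition OPT_C R K I (P : params R K I) (qr : K -> pt R) : \bar R :=
  ereal_sup [set (objC P x)%:E | x in feasC P qr].

From HB Require Import structures.
From mathcomp Require Import all_boot all_order all_algebra.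
From mathcomp Require Import boolp classical_sets reals constructive_ereal ereal exp.
From mathcomp Require Import ring lra.
Import Order.TTheory GRing.Theory Num.Theory.
Local Open Scope ring_scope.

(* Every constraint of (C) is an inner approximation of a constraint of (T):
   the squared distances ||q_k - q_j||^2 and ||q_j - s_i||^2 are convex, so
   they dominate their tangents at q^(r); and d |-> ln (s + sum_j a_j / d_j) is
   convex in d, so it dominates its tangent at d^(r).  Hence a feasible point
   (q, eta, xi, b) of (C) has q feasible for (T), eta_i <= r_i(q) and
   xi_i >= L / (B r_i(q)), and the objective of (C) is at most Psi(q). *)

Section RealFacts.
Context {R : realType}.

Lemma ln_le_subr1 {x : R} : 0 < x -> ln x <= x - 1.
Proof. by move=> x_gt0; have := @le_ln1Dx R (x - 1); rewrite [1 + _]addrC subrK; apply; lra. Qed.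

Lemma onemV_le_ln {x : R} : 0 < x -> 1 - x^-1 <= ln x.
Proof.
move=> x_gt0; have xV_gt0 : 0 < x^-1 by rewrite invr_gt0.
by have := ln_le_subr1 xV_gt0; rewrite lnV ?posrE //; lra.
Qed.

Lemma ln2_gt0 : 0 < ln (2 : R).
Proof. by apply: ln_gt0; lra. Qed.

Lemma powR2_log2 (y : R) : 0 < y -> powR 2 (log2 y) = y.
Proof.
move=> y_gt0; rewrite /powR ifF ?pnatr_eq0 // /log2.
by rewrite divfK ?lnK // gt_eqF // ln2_gt0.
Qed.

Lemma log2_div (x y : R) : 0 < x -> 0 < y -> log2 (x / y) = log2 x - log2 y.
Proof. by move=> x_gt0 y_gt0; rewrite /log2 ln_div ?posrE // mulrBl. Qed.

Lemma ler_log2 (x y : R) : 0 < x -> 0 < y -> (log2 x <= log2 y) = (x <= y).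
Proof. by move=> x_gt0 y_gt0; rewrite /log2 ler_pM2r ?invr_gt0 ?ln2_gt0 // ler_ln. Qed.

(* With Y0, Y the arguments of ln at d0, d and M := Y / Y0, each term satisfies
   1 - d_j / d0_j <= ln (d0_j / d_j) <= ln M + d0_j / (d_j M) - 1;
   weighting by a_j / d0_j and summing, the right-hand sides add up to at most
   Y0 ln M, using 1 - M^-1 <= ln M for the part carried by s. *)
Lemma ln_sum_inv_ge_tangent {K : finType} (s : R) (a d d0 : K -> R) :
  0 < s -> (forall j, 0 <= a j) -> (forall j, 0 < d j) -> (forall j, 0 < d0 j) ->
  ln (s + \sum_j a j / d0 j)
    - \sum_j a j / (d0 j ^+ 2 * (s + \sum_j a j / d0 j)) * (d j - d0 j)
  <= ln (s + \sum_j a j / d j).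
Proof.
move=> s_gt0 a_ge0 d_gt0 d0_gt0.
set S0 := \sum_j a j / d0 j; set S := \sum_j a j / d j.
have S0_ge0 : 0 <= S0 by apply: sumr_ge0 => j _; rewrite divr_ge0 // ltW.
have S_ge0 : 0 <= S by apply: sumr_ge0 => j _; rewrite divr_ge0 // ltW.
have Y0_gt0 : 0 < s + S0 by lra.
have Y_gt0 : 0 < s + S by lra.
set M := (s + S) / (s + S0).
have M_gt0 : 0 < M by apply: divr_gt0.
have lnM : ln M = ln (s + S) - ln (s + S0) by rewrite ln_div ?posrE.
have term j : a j / d0 j * (1 - d j / d0 j)
              <= a j / d0 j * ln M + a j / d j / M - a j / d0 j.
  have u_gt0 : 0 < d0 j / d j by apply: divr_gt0.
  have -> : a j / d0 j * ln M + a j / d j / M - a j / d0 j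
            = a j / d0 j * (ln M + d0 j / d j / M - 1).
    by field; rewrite !gt_eqF.
  rewrite ler_wpM2l ?divr_ge0 ?(ltW (d0_gt0 j)) //.
  have lower := onemV_le_ln u_gt0; have upper := ln_le_subr1 (divr_gt0 u_gt0 M_gt0).
  rewrite invf_div in lower; rewrite ln_div ?posrE // in upper; lra.
have := ler_sum (index_enum K) (fun j (_ : true) => term j).
rewrite sumrB big_split /= -!mulr_suml -/S0 -/S.
set F := \sum_j _; move=> F_le.
have S_divM : S / M = (s + S0) - s / M by rewrite /M invf_div; field; rewrite !gt_eqF.
have s_onemV : s * (1 - M^-1) <= s * ln M.
  by rewrite ler_wpM2l ?(ltW s_gt0) // onemV_le_ln.
have FY0_le : F / (s + S0) <= ln M by rewrite ler_pdivrMr // mulrC; lra.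
have -> : \sum_j a j / (d0 j ^+ 2 * (s + S0)) * (d j - d0 j) = - F / (s + S0).
  rewrite mulNr mulr_suml -sumrN; apply: eq_bigr => j _.
  by field; rewrite !gt_eqF.
lra.
Qed.

End RealFacts.

Section Plane.
Context {R : realType}.
Implicit Types x y a c : pt R.

Lemma dotp_ge0 a : 0 <= dotp a a.
Proof. by rewrite /dotp addr_ge0 // -expr2 sqr_ge0. Qed.

Lemma sqdist_ge0 x y : 0 <= sqdist x y.
Proof. exact: dotp_ge0. Qed.

Lemma sqnorm_ge_tangent a c : - dotp a a + 2 * dotp a c <= dotp c c.
Proof. by rewrite /dotp; have := sqr_ge0 (c.1 - a.1); have := sqr_ge0 (c.2 - a.2); nra. Qed.

Lemma sqdist_le_sqr x y r : dist x y <= r -> sqdist x y <= r ^+ 2.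
Proof.
rewrite /dist => le_r; rewrite -(sqr_sqrtr (sqdist_ge0 x y)).
by rewrite lerXn2r ?nnegrE ?sqrtr_ge0 // (le_trans (sqrtr_ge0 _) le_r).
Qed.

End Plane.

Section Rates.
Variables (R : realType) (K I : finType) (P : params R K I).
Hypotheses (Halt_gt0 : 0 < Halt P) (sigma2_gt0 : 0 < sigma2 P).
Hypotheses (omega_gt0 : forall i j, 0 < omega P i j) (pw_ge0 : forall j, 0 <= pw P j).

Definition rx_power (q : K -> pt R) (i : I) : R :=
  sigma2 P + \sum_j pw P j * hgain P q i j.

Definition interference (q : K -> pt R) (i : I) (k : K) : R :=
  sigma2 P + \sum_(j | j != k) pw P j * hgain P q i j.

Lemma Halt_sqdist_gt0 (x y : pt R) : 0 < Halt P ^+ 2 + sqdist x y.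
Proof. by have := sqdist_ge0 x y; have := exprn_gt0 2 Halt_gt0; lra. Qed.

Lemma pw_omega_ge0 i j : 0 <= pw P j * omega P i j.
Proof. by rewrite mulr_ge0 // ltW. Qed.

Lemma pw_hgainE q i j :
  pw P j * hgain P q i j = pw P j * omega P i j / (Halt P ^+ 2 + sqdist (q j) (spos P i)).
Proof. by rewrite /hgain mulrA. Qed.

Lemma pw_hgain_ge0 q i j : 0 <= pw P j * hgain P q i j.
Proof. by rewrite pw_hgainE divr_ge0 ?pw_omega_ge0 // ltW ?Halt_sqdist_gt0. Qed.

Lemma interference_gt0 q i k : 0 < interference q i k.
Proof. by rewrite ltr_wpDr // sumr_ge0 // => j _; apply: pw_hgain_ge0. Qed.

Lemma rx_powerE q i k : rx_power q i = interference q i k + pw P k * hgain P q i k.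
Proof. by rewrite /rx_power /interference (bigD1 k) //=; ring. Qed.

Lemma rx_power_gt0 q i : 0 < rx_power q i.
Proof. by rewrite ltr_wpDr // sumr_ge0 // => j _; apply: pw_hgain_ge0. Qed.

Lemma rateE q i :
  rate P q i = \sum_k assoc P i k * (log2 (rx_power q i) - log2 (interference q i k)).
Proof.
apply: eq_bigr => k _; congr (_ * _).
have Z_gt0 := interference_gt0 q i k.
rewrite -log2_div ?rx_power_gt0 // (rx_powerE _ _ k); congr log2.
by rewrite -/(interference q i k); field; rewrite gt_eqF.
Qed.

Lemma Dr_tangent_le qr q i :
  Dr P qr i - \sum_j Er P qr i j * (sqdist (q j) (spos P i) - sqdist (qr j) (spos P i))
  <= log2 (rx_power q i).
Proof.
have dr_gt0 j : 0 < dr P qr i j by apply: Halt_sqdist_gt0.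
set Y0 := sigma2 P + \sum_j pw P j * omega P i j / dr P qr i j.
have Y0_gt0 : 0 < Y0.
  by rewrite ltr_wpDr // sumr_ge0 // => j _; rewrite divr_ge0 ?pw_omega_ge0 ?ltW.
have := ln_sum_inv_ge_tangent (sigma2 P) (fun j => pw P j * omega P i j)
  (fun j => Halt P ^+ 2 + sqdist (q j) (spos P i)) (dr P qr i)
  sigma2_gt0 (pw_omega_ge0 i) (fun j => Halt_sqdist_gt0 _ _) dr_gt0.
rewrite /= -/Y0 (eq_bigr _ (fun j _ => esym (pw_hgainE q i j))) -/(rx_power q i).
set T := \sum_j _ => tangent_le.
have -> : \sum_j Er P qr i j * (sqdist (q j) (spos P i) - sqdist (qr j) (spos P i))
          = T / ln 2.
  rewrite /T mulr_suml; apply: eq_bigr => j _.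
  rewrite /Er /Dr powR2_log2 // -/Y0 /dr.
  by field; rewrite !gt_eqF ?ln2_gt0 ?Halt_sqdist_gt0.
by rewrite /Dr -/Y0 /log2 -mulrBl ler_pM2r ?invr_gt0 ?ln2_gt0.
Qed.

Lemma Lamt_le_Nlog2_interference q b i k :
  (forall j, - Halt P ^+ 2 < b i j) -> (forall j, b i j <= sqdist (q j) (spos P i)) ->
  Lamt P b i k <= - log2 (interference q i k).
Proof.
move=> b_gt b_le; have Hb_gt0 j : 0 < Halt P ^+ 2 + b i j by have := b_gt j; lra.
rewrite /Lamt lerN2 ler_log2 ?interference_gt0 //; last first.
  by rewrite ltr_wpDr // sumr_ge0 // => j _; rewrite divr_ge0 ?pw_omega_ge0 ?ltW.
rewrite lerD2l; apply: ler_sum => j _.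
by rewrite pw_hgainE ler_wpM2l ?pw_omega_ge0 // lef_pV2 ?posrE ?Halt_sqdist_gt0 // lerD2l.
Qed.

Lemma surrogate_rate_le_rate qr q b i :
  (forall k, 0 <= assoc P i k) ->
  (forall j, - Halt P ^+ 2 < b i j) -> (forall j, b i j <= sqdist (q j) (spos P i)) ->
  \sum_k assoc P i k *
     (Dr P qr i - \sum_j Er P qr i j *
        (sqdist (q j) (spos P i) - sqdist (qr j) (spos P i)))
  + \sum_k assoc P i k * Lamt P b i k <= rate P q i.
Proof.
move=> assoc_ge0 b_gt b_le.
rewrite rateE -big_split /=; apply: ler_sum => k _; rewrite -mulrDr ler_wpM2l //.
have := Dr_tangent_le qr q i; have := Lamt_le_Nlog2_interference _ _ _ k b_gt b_le; lra.
Qed.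

End Rates.

Section Problems.
Variables (R : realType) (K I : finType) (P : params R K I).

Lemma feasC_feasT qr q eta xi b : feasC P qr (q, eta, xi, b) -> feasT P q.
Proof.
move=> [_ [_ [_ [_ [sep [cov step]]]]]]; split=> //; split.
- by move=> k j kj; apply: le_trans (sep k j kj) (sqnorm_ge_tangent _ _).
- by move=> k; apply: sqdist_le_sqr.
Qed.

Lemma objC_le_PsiT q eta xi b :
  0 < Lvid P -> 0 < Bw P -> 0 <= Vrho P -> (forall i, 0 <= wgt P i) ->
  (forall i, 0 <= xi i /\ 0 <= eta i /\ Lvid P / Bw P <= xi i * eta i) ->
  (forall i, eta i <= rate P q i) ->
  ((objC P (q, eta, xi, b))%:E <= PsiT P q)%E.
Proof.
move=> L_gt0 B_gt0 V_ge0 wgt_ge0 xi_eta eta_le.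
have LB_gt0 : 0 < Lvid P / Bw P by apply: divr_gt0.
have eta_gt0 i : 0 < eta i.
  have [_ [eta_ge0 LB_le]] := xi_eta i.
  rewrite lt0r eta_ge0 andbT; apply/eqP => eta0; move: LB_le; rewrite eta0 mulr0; lra.
have rate_gt0 i : 0 < rate P q i by apply: lt_le_trans (eta_le i).
have delay_le i : Lvid P / (Bw P * rate P q i) <= xi i.
  have [xi_ge0 [_ LB_le]] := xi_eta i.
  by rewrite invfM mulrA ler_pdivrMr // (le_trans LB_le) // ler_wpM2l.
have delay_penE i : delay_pen P q i = (Lvid P / (Bw P * rate P q i))%:E.
  by rewrite /delay_pen gt_eqF.
rewrite /PsiT (eq_bigr _ (fun i _ => delay_penE i)) sumEFin -EFinM -EFinB lee_fin /=.
apply: lerB; first by apply: ler_sum => i _; rewrite ler_wpM2l.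
by rewrite ler_wpM2l // ler_sum.
Qed.

End Problems.

Theorem lemma2 (R : realType) (K I : finType) (P : params R K I) (qr : K -> pt R) :
  0 < Halt P -> 0 < sigma2 P ->
  (forall i j, 0 < omega P i j) ->
  (forall j, 0 <= pw P j) ->
  (forall i k, assoc P i k = 0 \/ assoc P i k = 1) ->
  (forall i, \sum_(k : K) assoc P i k <= 1) ->
  (forall k, \sum_(i : I) assoc P i k <= 1) ->
  0 < Lvid P -> 0 < Bw P -> 0 <= Vrho P ->
  (forall i, 0 <= wgt P i) ->
  0 < Rcov P -> 0 < dmin P -> 0 < smax P ->
  (OPT_C P qr <= OPT_T P)%E.
Proof.
move=> H_gt0 sigma2_gt0 omega_gt0 pw_ge0 assoc01 _ _ L_gt0 B_gt0 V_ge0 wgt_ge0 _ _ _.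
have assoc_ge0 i k : 0 <= assoc P i k by case: (assoc01 i k) => ->.
apply: ge_ereal_sup => _ [[[[q eta] xi] b] Cx <-].
have [b_gt [xi_eta [eta_le [b_le _]]]] := Cx.
have b_le_sqdist i j : b i j <= sqdist (q j) (spos P i).
  exact: le_trans (b_le i j) (sqnorm_ge_tangent _ _).
have eta_le_rate i : eta i <= rate P q i.
  by apply: le_trans (eta_le i) _; apply: surrogate_rate_le_rate.
apply: (@le_trans _ _ (PsiT P q)); first by apply: objC_le_PsiT.
by apply: ereal_sup_ubound; exists q => //; apply: feasC_feasT Cx.
Qed.
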